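(* For all positive integers $s,k$ and every integer $n\geq 2$, the graph $sL_{n+1}\cup kL_n$ (the disjoint union of $s$ copies of $L_{n+1}$ and $k$ copies of $L_n$) is $C_4$-supermagic.
   Context: All graphs are finite and simple. For a graph $H$, a graph $G=(V,E)$ has an $H$-covering if every edge of $G$ belongs to a subgraph of $G$ isomorphic to $H$. For such $G$, an $H$-magic labeling is a bijection $\lambda: V\cup E\to\{1,2,\dots,|V|+|E|\}$ for which there is a constant $c$ such that for every subgraph $H'=(V',E')$ of $G$ isomorphic to $H$, $\sum_{v\in V'}\lambda(v)+\sum_{e\in E'}\lambda(e)=c$. It is $H$-supermagic if moreover $\{\lambda(v):v\in V\}=\{1,\dots,|V|\}$; $G$ is $H$-supermagic if it admits such a labeling. $C_k$ is the cycle of length $k$. $sG$ denotes the disjoint union of $s$ copies of $G$, and $\cup$ denotes disjoint union. The ladder $L_n=P_n\times P_2$ ($n\ge2$) has vertices $u_i,v_i$ ($1\le i\le n$) and edges $u_iv_i$ ($1\le i\le n$), $u_iu_{i+1}$ and $v_iv_{i+1}$ ($1\le i\le n-1$). *)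

From mathcomp Require Import all_boot.
Set Implicit Arguments. Unset Strict Implicit. Unset Printing Implicit Defensive.

Section Graphs.
Variable V : finType.
Variable adj : rel V.

Definition edges : {set {set V}} :=
  [set e : {set V} | [exists x, [exists y, adj x y && (e == [set x; y])]]].

Definition is_C4_sub (F : {set {set V}}) : Prop :=
  F \subset edges /\
  exists a b c d : V,
    [&& a != b, a != c, a != d, b != c, b != d & c != d] /\
    F = [set [set a; b]; [set b; c]; [set c; d]; [set d; a]].

Definition C4_vertices (F : {set {set V}}) : {set V} := \bigcup_(e in F) e.

Definition C4_covering : Prop :=
  forall e, e \in edges -> exists F, is_C4_sub F /\ e \in F.

Definition is_total_labeling (lv : V -> nat) (le : {set V} -> nat) : Prop :=
  perm_eq ([seq lv v | v <- enum V] ++ [seq le e | e <- enum edges])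
          (iota 1 (#|V| + #|edges|)).

Definition C4_weight (lv : V -> nat) (le : {set V} -> nat) (F : {set {set V}}) :=
  \sum_(v in C4_vertices F) lv v + \sum_(e in F) le e.

Definition C4_magic_labeling lv le : Prop :=
  is_total_labeling lv le /\
  exists c, forall F, is_C4_sub F -> C4_weight lv le F = c.

Definition C4_supermagic_labeling lv le : Prop :=
  C4_magic_labeling lv le /\
  perm_eq [seq lv v | v <- enum V] (iota 1 #|V|).

Definition C4_supermagic : Prop :=
  C4_covering /\ exists lv le, C4_supermagic_labeling lv le.

End Graphs.

(* Ladder L_m = P_m x P_2 on vertices 'I_m * bool:
   (i,false) = u_{i+1}, (i,true) = v_{i+1}. *)
Definition ladder_adj (m : nat) : rel ('I_m * bool) :=
  fun x y =>
    ((x.1 == y.1) && (x.2 != y.2)) ||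
    ((x.2 == y.2) && ((x.1.+1 == y.1 :> nat) || (y.1.+1 == x.1 :> nat))).

Definition copies_adj (W : finType) (s : nat) (a : rel W) : rel ('I_s * W) :=
  fun x y => (x.1 == y.1) && a x.2 y.2.

Definition dunion_adj (W1 W2 : finType) (a1 : rel W1) (a2 : rel W2)
  : rel (W1 + W2) :=
  fun x y => match x, y with
             | inl x1, inl y1 => a1 x1 y1
             | inr x2, inr y2 => a2 x2 y2
             | _, _ => false
             end.

Definition ladders_adj (s k n : nat) :=
  dunion_adj (@copies_adj _ s (@ladder_adj n.+1)) (@copies_adj _ k (@ladder_adj n)).

From mathcomp Require Import all_boot zify.
Set Implicit Arguments. Unset Strict Implicit. Unset Printing Implicit Defensive.

(* Put the columns of all the ladders on one line: with Q = s + k, copy q of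
   L_{n+1} takes the positions q, q + Q, ..., q + nQ and copy q of L_n the
   positions s + q, ..., s + q + (n-1)Q.  They fill [0, M), M = nQ + s, and the
   graph becomes the "ladder of step Q" on [0, M) x {u, v}: rungs join (x, u)
   and (x, v), rails join x and x + Q on each side.  Its 4-cycles are exactly
   the squares on {x, x + Q}.  Label u_x by x + 1 and v_x by 2M - x (so every
   rung's endpoints sum to 2M + 1), the rung at x by 3M - x, and the rail
   (x, x + Q) by 3M + 1 + x on the u side and by 4M - Q + 1 + x on the v side.
   The weight of the square on {x, x + Q} is then 17M + 4 - 2Q, independent
   of x, and the labels exhaust [1, 2M] on vertices and [2M + 1, 5M - 2Q] on
   edges. *)

Lemma sum_set2 (T : finType) (F : T -> nat) a b :
  a != b -> \sum_(i in [set a; b]) F i = F a + F b.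
Proof. by move=> ab; rewrite big_setU1 ?big_set1 // inE. Qed.

Lemma sum_set4 (T : finType) (F : T -> nat) a b c d :
  [&& a != b, a != c, a != d, b != c, b != d & c != d] ->
  \sum_(i in [set a; b; c; d]) F i = F a + F b + F c + F d.
Proof.
case/andP=> ab /and5P[ac ad bc bd cd].
rewrite -!setUA big_setU1 /=; last by rewrite !inE !negb_or ab ac ad.
rewrite big_setU1 /=; last by rewrite !inE negb_or bc bd.
by rewrite sum_set2 // !addnA.
Qed.

Lemma set2_eq (T : finType) (a b x y : T) :
  [set a; b] = [set x; y] -> (a = x /\ b = y) \/ (a = y /\ b = x).
Proof.
move=> E; have ax : a \in [set x; y] by rewrite -E set21.
have bx : b \in [set x; y] by rewrite -E set22.
have xa : x \in [set a; b] by rewrite E set21.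
have ya : y \in [set a; b] by rewrite E set22.
by move: ax bx xa ya => /set2P[]? /set2P[]? /set2P[]? /set2P[]?; subst; auto.
Qed.

Lemma perm_map_iota (T : eqType) (f : T -> nat) (r : seq T) a m :
  uniq r -> {in r &, injective f} ->
  (forall x, x \in r -> a <= f x < a + m) ->
  (forall z, a <= z < a + m -> exists2 x, x \in r & f x = z) ->
  perm_eq [seq f x | x <- r] (iota a m).
Proof.
move=> r_uniq f_inj f_range f_onto.
apply: uniq_perm; rewrite ?iota_uniq ?map_inj_in_uniq // => z.
rewrite mem_iota; apply/mapP/idP=> [[x /f_range + ->] //|/f_onto[x xr <-]].
by exists x.
Qed.

Section Graphs.
Variables (V : finType) (adj : rel V).

Lemma adj_edges x y : adj x y -> [set x; y] \in edges adj.
Proof.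
move=> xy; rewrite inE; apply/existsP; exists x; apply/existsP; exists y.
by rewrite xy eqxx.
Qed.

Lemma edges_inv e : e \in edges adj -> exists x y, adj x y /\ e = [set x; y].
Proof. by rewrite inE => /existsP[x /existsP[y /andP[xy /eqP->]]]; exists x, y. Qed.

Hypotheses (adj_sym : symmetric adj) (adj_irr : irreflexive adj).

Lemma mem_edges2 x y : ([set x; y] \in edges adj) = adj x y.
Proof.
apply/idP/idP=> [/edges_inv[a [b [ab /set2_eq[[-> ->]|[-> ->]]]]] | /adj_edges] //.
by rewrite adj_sym.
Qed.

Lemma adj_neq x y : adj x y -> x != y.
Proof. by apply: contraTneq => ->; rewrite adj_irr. Qed.

Definition cycle4_edges (a b c d : V) : {set {set V}} :=
  [set [set a; b]; [set b; c]; [set c; d]; [set d; a]].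

Lemma cycle4_C4_sub a b c d : adj a b -> adj b c -> adj c d -> adj d a ->
  a != c -> b != d -> is_C4_sub adj (cycle4_edges a b c d).
Proof.
move=> ab bc cd da ac bd; split.
  apply/subsetP=> e; rewrite !in_setU !in_set1 -!orbA.
  by case/or4P=> /eqP->; apply: adj_edges.
exists a, b, c, d; split => //.
by rewrite ac bd (adj_neq ab) (adj_neq bc) (adj_neq cd) (eq_sym a d) (adj_neq da).
Qed.

Lemma C4_weight_cycle4 (lv : V -> nat) (le : {set V} -> nat) a b c d :
  [&& a != b, a != c, a != d, b != c, b != d & c != d] ->
  C4_weight lv le (cycle4_edges a b c d) =
    lv a + lv b + lv c + lv d +
    (le [set a; b] + le [set b; c] + le [set c; d] + le [set d; a]).
Proof.
move=> abcd; have /andP[ab /and5P[ac ad bc bd cd]] := abcd.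
have neq2 (x y z t : V) :
    (x \notin [set z; t]) || (y \notin [set z; t]) -> [set x; y] != [set z; t].
  by rewrite -negb_and; apply: contra => /eqP <-; rewrite set21 set22.
rewrite /C4_weight.
have -> : C4_vertices (cycle4_edges a b c d) = [set a; b; c; d].
  apply/setP=> z; rewrite /C4_vertices !bigcup_setU !big_set1 !inE.
  by do 4?case: (z == _).
rewrite sum_set4 // /cycle4_edges sum_set4 //.
by rewrite !neq2 // !inE !negb_or -?(eq_sym a) ?ab ?ac ?ad ?bc ?bd ?cd ?orbT.
Qed.

(* The value of f on any ordered pair spanning e; 0 (junk) if e is no edge. *)
Definition edge_label_of (f : V -> V -> nat) (e : {set V}) : nat :=
  if [pick p : V * V | adj p.1 p.2 && (e == [set p.1; p.2])] is Some p
  then f p.1 p.2 else 0.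

Lemma edge_label_ofE f x y :
  (forall x y, adj x y -> f x y = f y x) ->
  adj x y -> edge_label_of f [set x; y] = f x y.
Proof.
rewrite /edge_label_of => f_sym xy; case: pickP => [[a b] /= /andP[ab /eqP]|].
  by case/set2_eq=> [[-> ->]|[-> ->]] //; rewrite f_sym.
by move/(_ (x, y)); rewrite xy eqxx.
Qed.

Lemma C4_supermagic_labeling_of_perm lv le nv ne c :
  perm_eq [seq lv v | v <- enum V] (iota 1 nv) ->
  perm_eq [seq le e | e <- enum (edges adj)] (iota nv.+1 ne) ->
  (forall F, is_C4_sub adj F -> C4_weight lv le F = c) ->
  C4_supermagic_labeling adj lv le.
Proof.
move=> lvP leP weightP.
have cardV : #|V| = nv by rewrite cardE -(size_map lv) (perm_size lvP) size_iota.
have card_edges : #|edges adj| = ne.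
  by rewrite cardE -(size_map le) (perm_size leP) size_iota.
split; last by rewrite cardV.
split; last by exists c.
by rewrite /is_total_labeling cardV card_edges iotaD add1n perm_cat.
Qed.

End Graphs.

Section PositionLadder.
Variables Q M : nat.

Definition pos_adj (x : nat) (b : bool) (y : nat) (c : bool) : bool :=
  ((x == y) && (b != c)) || ((b == c) && ((x + Q == y) || (y + Q == x))).

Definition pos_vlabel (x : nat) (b : bool) : nat := if b then 2 * M - x else x.+1.

Definition pos_elabel (x : nat) (b : bool) (y : nat) : nat :=
  if x == y then 3 * M - x else (if b then 4 * M - Q else 3 * M) + (minn x y).+1.

Lemma pos_adj_sym x b y c : pos_adj x b y c = pos_adj y c x b.
Proof. rewrite /pos_adj; lia. Qed.

Lemma pos_adj_irr x b : 0 < Q -> pos_adj x b x b = false.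
Proof. rewrite /pos_adj; lia. Qed.

Lemma pos_elabel_sym x b y c :
  pos_adj x b y c -> pos_elabel x b y = pos_elabel y c x.
Proof. by rewrite /pos_adj /pos_elabel; case: b; case: c; case: ifP; case: ifP; lia. Qed.

(* Rungs flip the side and rails shift by Q, so a 4-cycle has two rungs and two
   rails of opposite directions; two consecutive rungs would give a = c. *)
Lemma pos_cycle4_square xa ba xb bb xc bc xd bd : 0 < Q ->
  pos_adj xa ba xb bb -> pos_adj xb bb xc bc ->
  pos_adj xc bc xd bd -> pos_adj xd bd xa ba ->
  (xa != xc) || (ba != bc) -> (xb != xd) || (bb != bd) ->
  (xa = xb /\ xc = xd /\ bb = bc /\ bd = ba /\ ba = ~~ bb) \/
  (xb = xc /\ xd = xa /\ ba = bb /\ bc = bd /\ bb = ~~ bc).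
Proof.
rewrite /pos_adj; case: ba; case: bb; case: bc; case: bd => /=; lia.
Qed.

Lemma pos_cycle4_weight xa ba xb bb xc bc xd bd : 0 < Q ->
  xa < M -> xb < M -> xc < M -> xd < M ->
  pos_adj xa ba xb bb -> pos_adj xb bb xc bc ->
  pos_adj xc bc xd bd -> pos_adj xd bd xa ba ->
  (xa != xc) || (ba != bc) -> (xb != xd) || (bb != bd) ->
  pos_vlabel xa ba + pos_vlabel xb bb + pos_vlabel xc bc + pos_vlabel xd bd +
  (pos_elabel xa ba xb + pos_elabel xb bb xc +
   pos_elabel xc bc xd + pos_elabel xd bd xa) = 17 * M + 4 - 2 * Q.
Proof.
move=> Q_gt0 ltaM ltbM ltcM ltdM ab_adj bc_adj cd_adj da_adj ac_neq bd_neq.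
have square := pos_cycle4_square Q_gt0 ab_adj bc_adj cd_adj da_adj ac_neq bd_neq.
move: square ab_adj bc_adj cd_adj da_adj ltaM ltbM ltcM ltdM; clear ac_neq bd_neq.
rewrite /pos_adj /pos_vlabel /pos_elabel.
by case=> [[<- [<- [<- [-> ->]]]] | [<- [<- [<- [-> ->]]]]]; [case: bb | case: bd];
  rewrite /= ?eqxx; repeat case: ifP; lia.
Qed.

(* A rung at x lies in the square on {x, x + Q}, or on {x - Q, x} when
   x + Q >= M (then x >= Q as M >= 2Q); a rail lies in the square it spans. *)
Lemma pos_edge_in_cycle4 x b y c : 0 < Q -> 2 * Q <= M -> x < M -> y < M ->
  pos_adj x b y c -> exists x3 b3 x4 b4,
  [/\ (x3 < M) && (x4 < M),
      pos_adj y c x3 b3, pos_adj x3 b3 x4 b4, pos_adj x4 b4 x b &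
      ((x != x3) || (b != b3)) && ((y != x4) || (c != b4))].
Proof.
move=> Q_gt0 M_ge2Q ltxM ltyM /orP[/andP[/eqP<- bc] | /andP[/eqP<- xy]].
  have [ltxQM | ] := ltnP (x + Q) M.
    by exists (x + Q), c, (x + Q), b; rewrite /pos_adj; split=> //; lia.
  by exists (x - Q), c, (x - Q), b; rewrite /pos_adj; split=> //; lia.
by exists y, (~~ b), x, (~~ b); rewrite /pos_adj; split=> //; case: b; lia.
Qed.

Lemma pos_vlabel_inj x b y c : x < M -> y < M ->
  pos_vlabel x b = pos_vlabel y c -> x = y /\ b = c.
Proof. by rewrite /pos_vlabel; case: b; case: c; lia. Qed.

Lemma pos_vlabel_range x b : x < M -> 1 <= pos_vlabel x b < 1 + 2 * M.
Proof. by rewrite /pos_vlabel; case: b; lia. Qed.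

Lemma pos_vlabel_onto z : 1 <= z < 1 + 2 * M ->
  exists x b, x < M /\ pos_vlabel x b = z.
Proof.
rewrite /pos_vlabel => z_range; have [le_zM | lt_Mz] := leqP z M.
  by exists z.-1, false; lia.
by exists (2 * M - z), true; lia.
Qed.

Lemma pos_elabel_inj x b y c x' b' y' c' : 0 < Q ->
  x < M -> y < M -> x' < M -> y' < M ->
  pos_adj x b y c -> pos_adj x' b' y' c' ->
  pos_elabel x b y = pos_elabel x' b' y' ->
  (x = x' /\ b = b' /\ y = y' /\ c = c') \/ (x = y' /\ b = c' /\ y = x' /\ c = b').
Proof.
rewrite /pos_adj /pos_elabel; case: b; case: c; case: b'; case: c'=> /=;
  repeat case: ifP; lia.
Qed.

Lemma pos_elabel_range x b y c : Q <= M -> x < M -> y < M -> pos_adj x b y c ->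
  (2 * M).+1 <= pos_elabel x b y < (2 * M).+1 + (3 * M - 2 * Q).
Proof. by rewrite /pos_adj /pos_elabel; case: b; case: c; case: ifP; lia. Qed.

Lemma pos_elabel_onto z : 0 < Q -> Q <= M ->
  (2 * M).+1 <= z < (2 * M).+1 + (3 * M - 2 * Q) ->
  exists x b y c, [/\ x < M, y < M, pos_adj x b y c & pos_elabel x b y = z].
Proof.
rewrite /pos_adj /pos_elabel => Q_gt0 Q_leM z_range.
have [le_z3M | lt_3Mz] := leqP z (3 * M).
  by exists (3 * M - z), false, (3 * M - z), true; rewrite eqxx; split=> //; lia.
have [le_z4MQ | lt_4MQz] := leqP z (4 * M - Q).
  exists (z - (3 * M).+1), false, (z - (3 * M).+1 + Q), false.
  by split=> //=; [lia | lia | rewrite eqxx; lia | case: ifP; lia].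
exists (z - (4 * M - Q).+1), true, (z - (4 * M - Q).+1 + Q), true.
by split=> //=; [lia | lia | rewrite eqxx; lia | case: ifP; lia].
Qed.

End PositionLadder.

Lemma eqn_divmod Q i j q r : q < Q -> r < Q ->
  (i * Q + q == j * Q + r) = (i == j) && (q == r).
Proof.
move=> ltqQ ltrQ; apply/eqP/andP=> [/(congr1 (edivn^~ Q))|[/eqP-> /eqP->] //].
by rewrite !edivn_eq // => -[-> ->].
Qed.

Lemma pos_adj_divmod Q i j q r b c : q < Q -> r < Q ->
  pos_adj Q (i * Q + q) b (j * Q + r) c =
  (q == r) && ((i == j) && (b != c) || (b == c) && ((i.+1 == j) || (j.+1 == i))).
Proof.
move=> ltqQ ltrQ; rewrite /pos_adj !(addnAC _ _ Q) -!mulSnr !eqn_divmod //.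
by rewrite (eq_sym r); case: (q == r); rewrite ?andbT ?andbF.
Qed.

Section Ladders.
Variables s k n : nat.

Local Notation V := (('I_s * ('I_n.+1 * bool)) + ('I_k * ('I_n * bool)))%type.
Local Notation adj := (@ladders_adj s k n).
Local Notation Q := (s + k).

Definition ladders_width := n * Q + s.
Local Notation M := ladders_width.

Definition pos (w : V) : nat :=
  match w with
  | inl (q, (i, _)) => i * Q + q
  | inr (q, (i, _)) => i * Q + (s + q)
  end.

Definition side (w : V) : bool :=
  match w with inl (_, (_, b)) | inr (_, (_, b)) => b end.

Lemma ladders_adjE w w' :
  adj w w' = pos_adj Q (pos w) (side w) (pos w') (side w').
Proof.
case: w => [[q [i b]]|[q [i b]]]; case: w' => [[r [j c]]|[r [j c]]];
  rewrite /ladders_adj /dunion_adj /copies_adj /ladder_adj /=;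
  rewrite pos_adj_divmod ?eqn_add2l //; have := ltn_ord q; have := ltn_ord r; lia.
Qed.

Lemma pos_lt w : pos w < M.
Proof.
rewrite /M; case: w => [[q [i b]]|[q [i b]]] /=; have := ltn_ord q.
  have : i * Q <= n * Q by rewrite leq_mul2r -ltnS ltn_ord orbT.
  lia.
have : i.+1 * Q <= n * Q by rewrite leq_mul2r ltn_ord orbT.
rewrite mulSnr; lia.
Qed.

Lemma pos_side_inj w w' : pos w = pos w' -> side w = side w' -> w = w'.
Proof.
case: w => [[q [i b]]|[q [i b]]]; case: w' => [[r [j c]]|[r [j c]]] /= /eqP;
  have := ltn_ord q; have := ltn_ord r => ltr ltq.
- rewrite eqn_divmod; try lia.
  by case/andP=> /eqP/val_inj-> /eqP/val_inj-> ->.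
- by rewrite eqn_divmod; lia.
- by rewrite eqn_divmod; lia.
- rewrite eqn_divmod ?eqn_add2l; try lia.
  by case/andP=> /eqP/val_inj-> /eqP/val_inj-> ->.
Qed.

Lemma neq_pos_side w w' : (w != w') = (pos w != pos w') || (side w != side w').
Proof.
rewrite -negb_and; congr (~~ _).
by apply/eqP/andP=> [->|[/eqP pos_eq /eqP side_eq]]; last exact: pos_side_inj.
Qed.

Lemma exists_vertex x b : x < M -> exists w, pos w = x /\ side w = b.
Proof.
rewrite /M => ltxM; have Q_gt0 : 0 < Q.
  by have [Q0|//] := posnP Q; move: ltxM; rewrite Q0 muln0; lia.
have x_eq := divn_eq x Q; have := ltn_pmod x Q_gt0.
have [ltxs | ] := ltnP (x %% Q) s => [_ | lesx ltxQ].
  have ltxn : x %/ Q < n.+1 by rewrite ltn_divLR // mulSnr; lia.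
  by exists (inl (Ordinal ltxs, (Ordinal ltxn, b))); split=> //=; lia.
have ltxk : x %% Q - s < k by lia.
have ltxn : x %/ Q < n by rewrite -(ltn_pmul2r Q_gt0); lia.
by exists (inr (Ordinal ltxk, (Ordinal ltxn, b))); split=> //=; lia.
Qed.

Lemma ladders_adj_sym : symmetric adj.
Proof. by move=> w w'; rewrite !ladders_adjE pos_adj_sym. Qed.

Lemma ladders_adj_irr : 0 < Q -> irreflexive adj.
Proof. by move=> Q_gt0 w; rewrite ladders_adjE pos_adj_irr. Qed.

Definition ladders_vlabel (w : V) : nat := pos_vlabel M (pos w) (side w).

Definition ladders_elabel : {set V} -> nat :=
  edge_label_of adj (fun w w' => pos_elabel Q M (pos w) (side w) (pos w')).

Lemma ladders_elabelE w w' :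
  adj w w' -> ladders_elabel [set w; w'] = pos_elabel Q M (pos w) (side w) (pos w').
Proof. by apply: edge_label_ofE => u v; rewrite ladders_adjE; apply: pos_elabel_sym. Qed.

Lemma ladders_C4_covering : 0 < Q -> 2 <= n -> C4_covering adj.
Proof.
move=> Q_gt0 n_ge2 e /edges_inv[w [w' [ww' ->]]].
have M_ge2Q : 2 * Q <= M by rewrite /M; nia.
have := ww'; rewrite ladders_adjE.
case/(pos_edge_in_cycle4 Q_gt0 M_ge2Q (pos_lt w) (pos_lt w'))=> x3 [b3 [x4 [b4 []]]].
case/andP=> /(exists_vertex b3)[w3 [<- <-]] /(exists_vertex b4)[w4 [<- <-]].
rewrite -!ladders_adjE -!neq_pos_side => w'w3 w3w4 w4w /andP[ww3 w'w4].
exists (cycle4_edges w w' w3 w4); split; last by rewrite !inE eqxx.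
exact: (cycle4_C4_sub (ladders_adj_irr Q_gt0) ww' w'w3 w3w4 w4w ww3 w'w4).
Qed.

Lemma ladders_C4_weight F : 0 < Q -> is_C4_sub adj F ->
  C4_weight ladders_vlabel ladders_elabel F = 17 * M + 4 - 2 * Q.
Proof.
move=> Q_gt0 [F_sub [a [b [c [d [abcd F_eq]]]]]].
rewrite -/(cycle4_edges a b c d) in F_eq; subst F.
have adj_of x y : [set x; y] \in cycle4_edges a b c d -> adj x y.
  by move=> xy; rewrite -(mem_edges2 ladders_adj_sym); apply: (subsetP F_sub).
have [ab bc cd da] : [/\ adj a b, adj b c, adj c d & adj d a].
  by split; apply: adj_of; rewrite !inE eqxx ?orbT.
have /andP[_ /and5P[ac _ _ bd _]] := abcd.
rewrite C4_weight_cycle4 // !ladders_elabelE //.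
by apply: pos_cycle4_weight; rewrite ?pos_lt -?ladders_adjE -?neq_pos_side.
Qed.

Lemma ladders_vlabel_perm :
  perm_eq [seq ladders_vlabel w | w <- enum (V : finType)] (iota 1 (2 * M)).
Proof.
apply: perm_map_iota; rewrite ?enum_uniq //.
- move=> w w' _ _ /(pos_vlabel_inj (pos_lt w) (pos_lt w'))[].
  exact: pos_side_inj.
- by move=> w _; apply: pos_vlabel_range; apply: pos_lt.
move=> z /pos_vlabel_onto[x [b [ltxM <-]]].
by have [w [<- <-]] := exists_vertex b ltxM; exists w; rewrite ?mem_enum.
Qed.

Lemma ladders_elabel_perm : 0 < Q -> 0 < n ->
  perm_eq [seq ladders_elabel e | e <- enum (edges adj)]
          (iota (2 * M).+1 (3 * M - 2 * Q)).
Proof.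
move=> Q_gt0 n_gt0; have Q_leM : Q <= M by rewrite /M; nia.
apply: perm_map_iota; rewrite ?enum_uniq //.
- move=> e e'; rewrite !mem_enum.
  move=> /edges_inv[a [b [ab ->]]] /edges_inv[c [d [cd ->]]].
  rewrite !ladders_elabelE //; move: ab cd; rewrite !ladders_adjE => ab cd.
  case/(pos_elabel_inj Q_gt0 (pos_lt a) (pos_lt b) (pos_lt c) (pos_lt d) ab cd)
    => [[ac [ac' [bd bd']]] | [ad [ad' [bc bc']]]].
    by rewrite (pos_side_inj ac ac') (pos_side_inj bd bd').
  by rewrite (pos_side_inj ad ad') (pos_side_inj bc bc') setUC.
- move=> e; rewrite mem_enum => /edges_inv[a [b [ab ->]]].
  rewrite ladders_elabelE //; move: ab; rewrite ladders_adjE.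
  by apply: pos_elabel_range; rewrite ?pos_lt.
move=> z /(pos_elabel_onto Q_gt0 Q_leM)[x [b [y [c [ltxM ltyM xy <-]]]]].
have [w [wx wb]] := exists_vertex b ltxM; have [w' [w'y w'c]] := exists_vertex c ltyM.
have ww' : adj w w' by rewrite ladders_adjE wx wb w'y w'c.
exists [set w; w']; first by rewrite mem_enum adj_edges.
by rewrite ladders_elabelE // wx wb w'y.
Qed.

End Ladders.

Unset Implicit Arguments.

Theorem theorem10 (s k n : nat) :
  0 < s -> 0 < k -> 2 <= n -> C4_supermagic (@ladders_adj s k n).
Proof.
move=> s_gt0 _ n_ge2; have Q_gt0 : 0 < s + k by rewrite addn_gt0 s_gt0.
split; first exact: ladders_C4_covering.
exists (@ladders_vlabel s k n), (@ladders_elabel s k n).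
apply: C4_supermagic_labeling_of_perm (ladders_vlabel_perm s k n)
  (ladders_elabel_perm Q_gt0 (ltnW n_ge2)) (fun F => ladders_C4_weight Q_gt0).
Qed.
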